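(* The sequence $a(n)=\sum_{k=0}^{\lfloor\frac{n-1}{2}\rfloor}(-1)^k e(n-1-k,k)$, $n\ge 0$ (with $a(0)=0$ as an empty sum), is periodic with period $12$, i.e. $a(n+12)=a(n)$ for all $n\ge0$, and its first twelve values $a(0),\dots,a(11)$ are $0,1,1,1,0,0,0,0,0,-1,-1,-1$.
   Context: $e(m,k)$ is the number of $k$-element subsets of $\{1,\dots,m\}$ whose sum of elements is even (the empty set counts as even). *)

From mathcomp Require Import all_boot all_order all_algebra.
Set Implicit Arguments. Unset Strict Implicit. Unset Printing Implicit Defensive.
Import GRing.Theory.

(* e m k = number of k-element subsets of {1,...,m} whose element sum is even.
   {1,...,m} is represented by 'I_m via i |-> i+1. *)
Definition e (m k : nat) : nat :=
  #|[set A : {set 'I_m} | (#|A| == k) && ~~ odd (\sum_(i in A) i.+1)%N]|.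

Definition a (n : nat) : int :=
  if n is 0 then 0%R
  else (\sum_(0 <= k < ((n - 1) %/ 2).+1) (-1) ^+ k * (e (n - 1 - k) k)%:Z)%R.

(* Write e_p(m, k) for the number of k-subsets of {1..m} whose sum has parity p.
   Then e_0 + e_1 = C(m, k), while e_0 - e_1 is the coefficient of x^k in
   prod_(i <= m) (1 + (-1)^i x); two consecutive factors multiply to 1 - x^2, so
   c(m+2, k+2) = c(m, k+2) - c(m, k).  Hence 2 a(n+1) = s(n) + d(n), where s and d
   are the alternating antidiagonal sums of C and c.  Pascal's rule gives
   s(n+2) = s(n+1) - s(n), so s has period 6; the recurrence for c gives
   d(n+4) = d(n+2) - d(n), so d has period 12.  The first twelve values are
   computed from the recursive description of e_p. *)

From mathcomp Require Import all_boot all_order all_algebra.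
From mathcomp Require Import zify ring.
Set Implicit Arguments. Unset Strict Implicit. Unset Printing Implicit Defensive.
Import GRing.Theory.

Fixpoint epar (m k : nat) (p : bool) : nat :=
  match m, k with
  | _, 0 => ~~ p
  | 0, _.+1 => 0
  | m'.+1, k'.+1 => epar m' k p + epar m' k' (p (+) odd m)
  end.

Lemma epar_small m k p : m < k -> epar m k p = 0.
Proof.
elim: m k p => [|m IHm] [|k] p //= ltmk.
by rewrite !IHm // ltnW.
Qed.

Lemma epar0 m p : epar m 0 p = ~~ p.
Proof. by case: m. Qed.

Section ExtendSet.
Variable m : nat.

Definition extend (Bb : {set 'I_m} * bool) : {set 'I_m.+1} :=
  [set i | if unlift ord_max i is Some j then j \in Bb.1 else Bb.2].

Lemma extend_bij : bijective extend.
Proof.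
exists (fun A : {set 'I_m.+1} => ([set j | lift ord_max j \in A], ord_max \in A)).
  case=> B b; congr pair; last by rewrite inE unlift_none.
  by apply/setP => j; rewrite !inE liftK.
move=> A; apply/setP => i; rewrite inE.
by case: unliftP => [j ->|->]; rewrite ?inE.
Qed.

Lemma big_extend (F : 'I_m.+1 -> nat) B (b : bool) :
  \sum_(i in extend (B, b)) F i = \sum_(j in B) F (lift ord_max j) + b * F ord_max.
Proof.
rewrite big_mkcond (bigD1_ord ord_max) //= addnC inE unlift_none.
congr addn; last by case: b; rewrite ?mul1n.
by rewrite [RHS]big_mkcond; apply: eq_bigr => j _; rewrite inE liftK.
Qed.

Lemma card_extend B (b : bool) : #|extend (B, b)| = #|B| + b.
Proof. by rewrite -!sum1_card big_extend muln1. Qed.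

Lemma sum_succ_extend B (b : bool) :
  \sum_(i in extend (B, b)) i.+1 = \sum_(j in B) j.+1 + b * m.+1.
Proof. by rewrite big_extend; under eq_bigr => j _ do rewrite lift_max. Qed.

End ExtendSet.

Lemma epar_count m k p :
  \sum_(A : {set 'I_m}) ((#|A| == k) && (odd (\sum_(i in A) i.+1) == p) : nat)
  = epar m k p.
Proof.
elim: m k p => [|m IHm] k p.
  rewrite (big_pred1 set0) => [|A]; last by apply/esym/eqP/setP => -[].
  by rewrite cards0 big_set0; case: k; case: p.
rewrite (reindex _ (onW_bij _ (extend_bij m))) /=.
rewrite -(pair_big xpredT xpredT (fun B b => ((#|extend (B, b)| == k) &&
  (odd (\sum_(i in extend (B, b)) i.+1) == p) : nat))) /=.
under eq_bigr => B _ do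
  rewrite big_bool !sum_succ_extend !card_extend /= mul1n mul0n !addn0 addn1.
rewrite big_split /= addnC IHm; case: k => [|k] /=.
  by rewrite big1 // addn0 epar0.
rewrite -[epar m k _]IHm; congr (_ + _); apply: eq_bigr => B _.
by rewrite eqSS oddD /=; case: (odd _); case: p; case: (odd m).
Qed.

Lemma e_epar m k : e m k = epar m k false.
Proof.
rewrite /e -epar_count -sum1_card big_mkcond.
by apply: eq_bigr => A _; rewrite inE eqbF_neg; case: (_ && _).
Qed.

Local Open Scope ring_scope.

Lemma epar_binomial m k : (epar m k false + epar m k true)%N = 'C(m, k).
Proof.
elim: m k => [|m IHm] [|k] //=.
by rewrite binS -!IHm; case: (odd m) => /=; lia.
Qed.

Definition epar_diff m k : int := (epar m k false)%:Z - (epar m k true)%:Z.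

Lemma epar_diff0 m : epar_diff m 0 = 1.
Proof. by rewrite /epar_diff !epar0. Qed.

Lemma epar_diff_small m k : (m < k)%N -> epar_diff m k = 0.
Proof. by move=> ltmk; rewrite /epar_diff !epar_small. Qed.

Lemma epar_diff1 m : epar_diff m.+2 1 = epar_diff m 1.
Proof. by rewrite /epar_diff /= !epar0; case: (odd m) => /=; rewrite !PoszD; ring. Qed.

Lemma epar_diffSS m k : epar_diff m.+2 k.+2 = epar_diff m k.+2 - epar_diff m k.
Proof. by rewrite /epar_diff /=; case: (odd m) => /=; rewrite !PoszD; ring. Qed.

Lemma sumr_nat_truncate (V : nmodType) (F : nat -> V) n m : (n <= m)%N ->
  (forall k, (n <= k)%N -> F k = 0) -> \sum_(0 <= k < m) F k = \sum_(0 <= k < n) F k.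
Proof.
move=> lenm F0; rewrite (big_cat_nat (leq0n n) lenm) /= [X in _ + X]big_nat_cond.
by rewrite [X in _ + X]big1 ?addr0 // => k /andP[/andP[/F0]].
Qed.

Definition alt_diag (f : nat -> nat -> int) N :=
  \sum_(0 <= k < N.+1) (-1) ^+ k * f (N - k)%N k.

Lemma alt_diagS f N : alt_diag f N.+1 = f N.+1 0 - alt_diag (fun m k => f m k.+1) N.
Proof.
rewrite /alt_diag big_nat_recl // subn0 expr0 mul1r -sumrN; congr (_ + _).
by apply: eq_bigr => k _; rewrite subSS exprS mulN1r mulNr.
Qed.

(* Extra terms k > N are [f 0 k], because [N - k] truncates to 0. *)
Lemma alt_diag_widen f N j : (forall k, f 0 k.+1 = 0) ->
  alt_diag f N = \sum_(0 <= k < N.+1 + j) (-1) ^+ k * f (N - k)%N k.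
Proof.
move=> f0; rewrite (sumr_nat_truncate (leq_addr j N.+1)) // => -[|k] // ltNk.
have /eqP-> : (N - k.+1 == 0)%N by rewrite subn_eq0 ltnW.
by rewrite f0 mulr0.
Qed.

Section AltDiagRecurrences.
Variable f : nat -> nat -> int.
Hypothesis f_col0 : forall m, f m 0 = 1.
Hypothesis f_small : forall m k, (m < k)%N -> f m k = 0.

Let f0S k : f 0 k.+1 = 0. Proof. exact: f_small. Qed.

Lemma alt_diag_pascal N :
  (forall m k, f m.+1 k.+1 = f m k.+1 + f m k) ->
  alt_diag f N.+2 = alt_diag f N.+1 - alt_diag f N.
Proof.
move=> fS.
have fS_trunc k : f (N.+1 - k) k.+1 = f (N - k) k.+1 + f (N - k) k.
  have [leKN | ltNK] := leqP k N; first by rewrite subSn // fS.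
  by rewrite !f_small ?addr0 //; lia.
have shiftS : alt_diag (fun m k => f m k.+1) N.+1 =
              alt_diag (fun m k => f m k.+1) N + alt_diag f N.
  rewrite (alt_diag_widen N 1 f0S) (alt_diag_widen N 1 (fun k => f0S k.+1)).
  by rewrite -big_split /alt_diag addn1; apply: eq_bigr => k _; rewrite fS_trunc mulrDr.
by rewrite [LHS]alt_diagS [alt_diag f N.+1]alt_diagS shiftS !f_col0 opprD addrA.
Qed.

Lemma alt_diag_pascal2 N :
  (forall m, f m.+2 1 = f m 1) ->
  (forall m k, f m.+2 k.+2 = f m k.+2 - f m k) ->
  alt_diag f N.+4 = alt_diag f N.+2 - alt_diag f N.
Proof.
move=> f1 fSS.
have fSS_trunc k : f (N.+2 - k) k.+2 = f (N - k) k.+2 - f (N - k) k.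
  have [leKN | ltNK] := leqP k N.
    by have -> : (N.+2 - k = (N - k).+2)%N by lia.
  by rewrite !f_small ?subr0 //; lia.
have shift2S : alt_diag (fun m k => f m k.+2) N.+2 =
               alt_diag (fun m k => f m k.+2) N - alt_diag f N.
  rewrite (alt_diag_widen N 2 f0S) (alt_diag_widen N 2 (fun k => f0S k.+2)).
  rewrite -sumrN -big_split /alt_diag addn2; apply: eq_bigr => k _.
  by rewrite fSS_trunc mulrBr.
rewrite [LHS]alt_diagS [alt_diag f N.+2]alt_diagS !(alt_diagS (fun m k => f m k.+1)).
by rewrite shift2S f1 !f_col0; ring.
Qed.
End AltDiagRecurrences.

Lemma period6_of_rec (V : zmodType) (u : nat -> V) :
  (forall n, u n.+2 = u n.+1 - u n) -> forall n, u (n + 6)%N = u n.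
Proof.
move=> rec; have anti n : u n.+3 = - u n by rewrite !rec addrAC subrr add0r.
by move=> n; rewrite !addnS addn0 !anti opprK.
Qed.

Definition binz m k : int := 'C(m, k).

Lemma alt_diag_binz_period N : alt_diag binz (N + 6) = alt_diag binz N.
Proof.
apply: period6_of_rec => {}N; apply: alt_diag_pascal => [m|m k|m k]; rewrite /binz.
- by rewrite bin0.
- by move=> ltmk; rewrite bin_small.
- by rewrite binS PoszD.
Qed.

Lemma alt_diag_epar_diff_period N :
  alt_diag epar_diff (N + 12) = alt_diag epar_diff N.
Proof.
have := period6_of_rec (u := fun n => alt_diag epar_diff (N + n.*2)) _ 0.
rewrite addn0 => -> //= n.
rewrite doubleS !addnS alt_diag_pascal2 //.
- exact: epar_diff0.
- exact: epar_diff_small.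
- exact: epar_diff1.
- exact: epar_diffSS.
Qed.

Lemma a_epar N :
  a N.+1 = \sum_(0 <= k < (N %/ 2).+1) (-1) ^+ k * (epar (N - k) k false)%:Z.
Proof. by rewrite /a subn1; apply: eq_bigr => k _; rewrite e_epar. Qed.

Lemma two_a N : 2 * a N.+1 = alt_diag binz N + alt_diag epar_diff N.
Proof.
rewrite a_epar /alt_diag -big_split /= mulr_sumr.
rewrite [RHS](@sumr_nat_truncate _ _ (N %/ 2).+1) ?ltnS ?leq_div //; last first.
  by move=> k ltk; rewrite epar_diff_small /binz ?bin_small ?mulr0 ?addr0 //; lia.
apply: eq_bigr => k _; rewrite /binz /epar_diff -epar_binomial PoszD; ring.
Qed.

Lemma a_period n : a (n + 12) = a n.
Proof.
case: n => [|N]; first by rewrite a_epar unlock; vm_compute.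
apply: (@mulfI _ 2) => //.
rewrite addSn !two_a alt_diag_epar_diff_period.
have -> : (N + 12 = N + 6 + 6)%N by rewrite -addnA.
by rewrite !alt_diag_binz_period.
Qed.

Theorem proposition4p4 :
  (forall n : nat, a (n + 12) = a n) /\
  [seq a n | n <- iota 0 12] =
    [:: 0; 1; 1; 1; 0; 0; 0; 0; 0; -1; -1; -1]%R.
Proof.
split; first exact: a_period.
by cbn -[a]; rewrite !a_epar unlock; vm_compute.
Qed.
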